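(* Let $(x_k)_{k\ge0}$ be an arbitrary sequence of numbers (or indeterminates), define $a_n=x_n$ if $n=2^k-1$ for some integer $k\ge0$ and $a_n=0$ otherwise, and let $d(n)=\det\left(a_{i+j}\right)_{i,j=0}^{n-1}$ with $d(0)=1$. Then $d(0)=1$, $d(1)=x_0$, $d(2)=-x_1^2$, and for all integers $k,n$ with $1<2^{k-1}<n\le 2^k$, $$d(n)=(-1)^n x_{2^k-1}^{2n-2^k}\,d(2^k-n).$$ *)

(* Entries live in an arbitrary commutative ring R
   ("numbers or indeterminates"). *)
From HB Require Import structures.
From mathcomp Require Import all_boot all_order all_algebra.
Set Implicit Arguments. Unset Strict Implicit. Unset Printing Implicit Defensive.
Import GRing.Theory.
Local Open Scope ring_scope.

(* n = 2^k - 1 for some k >= 0, i.e. n+1 is a power of two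
   (any such k satisfies k < n+1, since 2^k > k). *)
Definition is_pow2_minus1 (n : nat) : bool :=
  [exists k : 'I_n.+1, n.+1 == 2 ^ (k : nat)]%N.

Definition aseq (R : comRingType) (x : nat -> R) (n : nat) : R :=
  if is_pow2_minus1 n then x n else 0.

Definition dseq (R : comRingType) (x : nat -> R) (n : nat) : R :=
  \det (\matrix_(i < n, j < n) aseq x (i + j)%N).

From mathcomp Require Import all_boot all_order all_algebra.
From mathcomp Require Import zify ring.
Set Implicit Arguments. Unset Strict Implicit. Unset Printing Implicit Defensive.
Import GRing.Theory.
Local Open Scope ring_scope.

(* Let 2^K < n <= 2^(K+1) and N = 2^(K+1). Every index v with
   2^K <= v <= 2^(K+2) - 2 carries a_v = 0 except v = N - 1, so the last row
   and the last column of (a_(i+j)) each have a single nonzero entry x_(N-1),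
   in position N - n. Expanding along both deletes the indices n - 1 and N - n
   and contributes -x_(N-1)^2; the result is the principal submatrix of the
   Hankel matrix on an index set [0, m) u [m + q, ...), to which the same
   argument applies. After n - 2^K steps only the leading block of size
   m = N - n is left, and (-1)^(n - 2^K) = (-1)^n as soon as 2^K is even. *)

Lemma is_pow2_minus1P n : reflect (exists k, n.+1 = 2 ^ k)%N (is_pow2_minus1 n).
Proof.
apply: (iffP existsP) => [[k /eqP ->]|[k ek]]; first by exists k.
have lt_k : (k < n.+1)%N by rewrite ek ltn_expl.
by exists (Ordinal lt_k); apply/eqP.
Qed.

Section SingleEntryExpansion.
Variables (R : comPzRingType) (n : nat) (A : 'M[R]_n).

Lemma expand_det_row_single i0 j0 :
  (forall j, j != j0 -> A i0 j = 0) -> \det A = A i0 j0 * cofactor A i0 j0.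
Proof.
move=> A0; rewrite (expand_det_row _ i0) (bigD1 j0) //= big1 ?addr0 // => j /A0 ->.
exact: mul0r.
Qed.

Lemma expand_det_col_single i0 j0 :
  (forall i, i != i0 -> A i j0 = 0) -> \det A = A i0 j0 * cofactor A i0 j0.
Proof.
move=> A0; rewrite (expand_det_col _ j0) (bigD1 i0) //= big1 ?addr0 // => i /A0 ->.
exact: mul0r.
Qed.

End SingleEntryExpansion.

Lemma det_peel_max (R : comPzRingType) s (A : 'M[R]_s.+2) (j : 'I_s.+1) :
  let w := widen_ord (leqnSn _) j in
  (forall k, k != w -> A ord_max k = 0) -> (forall k, k != w -> A k ord_max = 0) ->
  \det A = - (A ord_max w * A w ord_max) *
    \det (\matrix_(a, b) A (widen_ord (leqnSn _) (lift j a))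
                           (widen_ord (leqnSn _) (lift j b))).
Proof.
move=> w row0 col0; rewrite (expand_det_row_single row0) /cofactor.
set B := row' _ _.
have lift_w_max : lift w ord_max = ord_max.
  by apply: val_inj; rewrite /= /bump; have := ltn_ord j; lia.
have lift_max_widen k : lift ord_max k = widen_ord (leqnSn _) k.
  by apply: val_inj; rewrite /= /bump leqNgt ltn_ord.
have B0 : forall a, a != j -> B a ord_max = 0.
  move=> a ne_aj; rewrite !mxE lift_w_max lift_max_widen; apply: col0.
  by apply: contra ne_aj => /eqP/(congr1 val) eq_aj; apply/eqP/val_inj.
rewrite (expand_det_col_single B0) /cofactor.
have -> : B j ord_max = A w ord_max by rewrite !mxE lift_w_max lift_max_widen.
have -> : row' j (col' ord_max B) =
          \matrix_(a, b) A (widen_ord (leqnSn _) (lift j a)) (widen_ord (leqnSn _) (lift j b)).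
  by apply/matrixP => a b; rewrite !mxE !lift_max_widen; congr (A _ _); apply: val_inj.
have sgn : (-1) ^+ (s.+1 + j) * (-1) ^+ (j + s) = - 1 :> R.
  rewrite -exprD -signr_odd (_ : (_ + _ = (j + s).*2.+1)%N); last lia.
  by rewrite /= odd_double.
set D := \det _; rewrite /=.
transitivity ((-1) ^+ (s.+1 + j) * (-1) ^+ (j + s) * (A ord_max w * A w ord_max) * D).
  by ring.
by rewrite sgn mulN1r.
Qed.

Section HankelMinors.
Variables (R : comRingType) (x : nat -> R).

Lemma aseq_pow2B1 k : aseq x (2 ^ k - 1) = x (2 ^ k - 1).
Proof.
rewrite /aseq; case: is_pow2_minus1P => // -[]; exists k.
by have := expn_gt0 2 k; lia.
Qed.

Lemma aseq_gap K v : (2 ^ K <= v <= 2 ^ K.+2 - 2)%N -> v != (2 ^ K.+1 - 1)%N ->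
  aseq x v = 0.
Proof.
move=> /andP[lo hi] ne_v; rewrite /aseq; case: is_pow2_minus1P => // -[t ev].
have ltKt : (2 ^ K < 2 ^ t)%N by rewrite -ev; lia.
have lttK2 : (2 ^ t < 2 ^ K.+2)%N by rewrite -ev; have := expn_gt0 2 K.+2; lia.
rewrite !ltn_exp2l // in ltKt lttK2.
have et : t = K.+1 by lia.
by rewrite et in ev; rewrite -ev subn1 eqxx in ne_v.
Qed.

Definition gap (m q t : nat) : nat := if (t < m)%N then t else (t + q)%N.

Definition gap_hankel m q s : 'M[R]_s := \matrix_(i, j) aseq x (gap m q i + gap m q j).

Lemma gap_inj m q : injective (gap m q).
Proof. by move=> t u; rewrite /gap; case: ifP; case: ifP; lia. Qed.

Lemma gap_bump m q t : gap m q (bump m t) = gap m q.+1 t.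
Proof. by rewrite /gap /bump; case: (ltnP t m) => ?; case: ifP; lia. Qed.

Lemma det_gap_hankel_gap0 m s : \det (gap_hankel m 0 s) = dseq x s.
Proof.
by congr (\det _); apply/matrixP => i j; rewrite !mxE /gap; case: ifP; case: ifP; rewrite ?addn0.
Qed.

Lemma det_gap_hankel_short m q : \det (gap_hankel m q m) = dseq x m.
Proof. by congr (\det _); apply/matrixP => i j; rewrite !mxE /gap !ltn_ord. Qed.

Lemma det_gap_hankel_peel K m q r : (m + q + r.+1 = 2 ^ K)%N ->
  \det (gap_hankel m q (m + 2 * r).+2) =
    - x (2 ^ K.+1 - 1) ^+ 2 * \det (gap_hankel m q.+1 (m + 2 * r)).
Proof.
move=> sum_eq; have lt_m : (m < (m + 2 * r).+1)%N by lia.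
set A := gap_hankel m q _.
set j : 'I_(m + 2 * r).+1 := inord m.
set w := widen_ord (leqnSn _) j.
have val_w : (w : nat) = m by rewrite /= inordK.
have pow2S : (2 ^ K.+1 = 2 * 2 ^ K)%N by rewrite expnS.
have pow2SS : (2 ^ K.+2 = 4 * 2 ^ K)%N by rewrite !expnS mulnA.
have gap_max : gap m q (ord_max : 'I_(m + 2 * r).+2) = (2 ^ K + r)%N.
  by rewrite /gap /=; case: ifP; lia.
have gap_w : gap m q w = (2 ^ K - r.+1)%N by rewrite val_w /gap ltnn; lia.
have entry0 k : k != w -> aseq x (gap m q (ord_max : 'I_(m + 2 * r).+2) + gap m q k) = 0.
  move=> ne_kw; apply: (aseq_gap (K := K)).
    have := ltn_ord k; rewrite gap_max pow2SS /gap; case: ifP; lia.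
  rewrite gap_max pow2S; apply: contra ne_kw => /eqP eq_sum.
  by apply/eqP/val_inj/(@gap_inj m q) => /=; rewrite gap_w; lia.
have row0 k : k != w -> A ord_max k = 0 by move=> ne_kw; rewrite mxE entry0.
have col0 k : k != w -> A k ord_max = 0 by move=> ne_kw; rewrite mxE addnC entry0.
have corner : aseq x (gap m q (ord_max : 'I_(m + 2 * r).+2) + gap m q w) = x (2 ^ K.+1 - 1).
  by rewrite gap_max gap_w (_ : (_ + _ = 2 ^ K.+1 - 1)%N) ?aseq_pow2B1 //; lia.
rewrite (det_peel_max row0 col0) !mxE [(gap _ _ w + _)%N]addnC corner.
congr (_ * \det _); apply/matrixP => a b.
by rewrite !mxE /= inordK // !gap_bump.
Qed.

Lemma det_gap_hankel K m q r : (m + q + r = 2 ^ K)%N ->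
  \det (gap_hankel m q (m + 2 * r)) =
    (-1) ^+ r * x (2 ^ K.+1 - 1) ^+ (2 * r) * dseq x m.
Proof.
elim: r q => [|r IH] q sum_eq.
  by rewrite muln0 addn0 det_gap_hankel_short !expr0 !mul1r.
rewrite (_ : m + 2 * r.+1 = (m + 2 * r).+2)%N; last lia.
rewrite (det_gap_hankel_peel sum_eq) (IH q.+1); last lia.
by rewrite mulnS exprD [_ ^+ r.+1]exprS; ring.
Qed.

Lemma dseq_pow2_recursion K n : (2 ^ K < n <= 2 ^ K.+1)%N ->
  dseq x n = (-1) ^+ (n - 2 ^ K) * x (2 ^ K.+1 - 1) ^+ (2 * n - 2 ^ K.+1)
             * dseq x (2 ^ K.+1 - n).
Proof.
rewrite expnS => /andP[lo hi].
set m := (2 * 2 ^ K - n)%N.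
have n_eq : n = (m + 2 * (n - 2 ^ K))%N by rewrite /m; lia.
rewrite -[in LHS](det_gap_hankel_gap0 m) [in LHS]n_eq (@det_gap_hankel K m 0).
  by rewrite -mulnBr -expnS.
by rewrite /m; lia.
Qed.

End HankelMinors.

Unset Implicit Arguments.
Theorem theorem4p5 (R : comRingType) (x : nat -> R) :
  [/\ dseq x 0 = 1, dseq x 1 = x 0%N, dseq x 2 = - x 1%N ^+ 2 &
   forall k n : nat, (1 < 2 ^ (k - 1) < n)%N -> (n <= 2 ^ k)%N ->
     dseq x n = (-1) ^+ n * x (2 ^ k - 1)%N ^+ (2 * n - 2 ^ k)%N
                * dseq x (2 ^ k - n)%N].
Proof.
have dseq0 : dseq x 0 = 1 by rewrite /dseq det_mx00.
split=> //.
- by rewrite /dseq det_mx11 mxE (aseq_pow2B1 x 0).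
- by rewrite (dseq_pow2_recursion x (K := 0)) // dseq0 mulr1 expr1 mulN1r.
case=> [|K] n; first by rewrite expn0.
rewrite subSS subn0 => /andP[K_gt0 lo] hi.
rewrite (dseq_pow2_recursion x (K := K)) ?lo //.
case: K K_gt0 lo hi => [|K] // _ lo _.
suff -> : (-1) ^+ n = (-1) ^+ (n - 2 ^ K.+1) :> R by [].
by rewrite -{1}(subnK (ltnW lo)) exprD expnS exprM sqrrN !expr1n mulr1.
Qed.
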